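(* Let $\mathcal{O}\subset\mathbb{R}^n$ be open, let $V:\mathcal{O}\to\mathbb{R}$ be locally Lipschitz, let $F:\mathcal{O}\rightrightarrows\mathbb{R}^n$ be inner semicontinuous and locally bounded in $\mathcal{O}$, let $\mathcal{A}\subset\mathbb{R}^n$ be closed and let $\gamma:\mathbb{R}_{\geq 0}\to\mathbb{R}$ be continuous. Suppose that $$\langle \nabla V(y), f\rangle \leq \gamma(|y|_\mathcal{A})\quad \text{for all } y\in\mathcal{O}\setminus\mathcal{N}_V \text{ and all } f\in F(y).$$ Then $$\langle v, f\rangle\leq \gamma(|x|_\mathcal{A})\quad\text{for all } x\in\mathcal{O},\ \text{all } v\in\partial V(x),\ \text{all } f\in F(x).$$
   Context: $|x|_\mathcal{A}=\min_{y\in\mathcal{A}}|x-y|$ is the Euclidean distance to $\mathcal{A}$. $\mathcal{N}_V:=\{x\in\mathcal{O}: \nabla V(x)\text{ does not exist}\}$. The Clarke generalized gradient is $\partial V(x):=\mathrm{co}\{v\in\mathbb{R}^n: \exists x_k\to x,\ x_k\notin\mathcal{N}_V,\ v=\lim_k\nabla V(x_k)\}$. A set-valued map $F:\mathcal{C}\rightrightarrows\mathbb{R}^n$ is inner semicontinuous relative to $\mathcal{C}$ at $x\in\mathcal{C}$ if for every $f\in F(x)$ and every sequence $x_k\in\mathcal{C}$ with $x_k\to x$ there exist $f_k\in F(x_k)$ with $f_k\to f$; it is inner semicontinuous in $\mathcal{C}$ if this holds at every $x\in\mathcal{C}$. $F$ is locally bounded in $\mathcal{C}$ if every $x\in\mathcal{C}$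 has a neighborhood $\mathcal{U}$ with $F(\mathcal{U}\cap\mathcal{C})$ bounded. *)

From HB Require Import structures.
From mathcomp Require Import all_boot all_order all_algebra.
From mathcomp Require Import all_classical all_reals all_analysis.
Set Implicit Arguments. Unset Strict Implicit. Unset Printing Implicit Defensive.
Import Order.TTheory GRing.Theory Num.Theory.
Import numFieldNormedType.Exports.
Local Open Scope classical_set_scope.
Local Open Scope ring_scope.

Section Defs.
Variables (R : realType) (n : nat).
Notation vec := 'rV[R]_n.

Definition dotp (u v : vec) : R := \sum_(i < n) u 0 i * v 0 i.
Definition enorm (u : vec) : R := Num.sqrt (dotp u u).

Definition dist_set (A : set vec) (x : vec) : R :=
  inf [set enorm (x - y) | y in A].

(* Gradient of V at x (meaningful when V is differentiable at x):
   the vector of partial derivatives, i.e. of the Frechet derivative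
   evaluated at the canonical basis vectors. *)
Definition grad (V : vec -> R) (x : vec) : vec :=
  \row_(i < n) ('d V x) (delta_mx 0 i).

Definition nondiff_set (O : set vec) (V : vec -> R) : set vec :=
  [set x | O x /\ ~ differentiable V x].

Definition conv_hull (S : set vec) : set vec :=
  [set v | exists (m : nat) (w : 'I_m -> R) (p : 'I_m -> vec),
      (forall i, 0 <= w i) /\ \sum_(i < m) w i = 1 /\
      (forall i, S (p i)) /\ v = \sum_(i < m) w i *: p i].

Definition clarke_grad (O : set vec) (V : vec -> R) (x : vec) : set vec :=
  conv_hull [set v | exists xk : nat -> vec,
     xk @ \oo --> x /\ (forall k, O (xk k) /\ ~ nondiff_set O V (xk k)) /\
     (fun k => grad V (xk k)) @ \oo --> v].

Definition locally_lipschitz_on (O : set vec) (V : vec -> R) : Prop :=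
  forall x, O x -> exists r : R, 0 < r /\ exists L : R,
    forall y z, O y -> O z -> enorm (y - x) < r -> enorm (z - x) < r ->
      `|V y - V z| <= L * enorm (y - z).

Definition inner_semicontinuous_in (C : set vec) (F : vec -> set vec) : Prop :=
  forall x, C x -> forall f, F x f ->
    forall xk : nat -> vec, (forall k, C (xk k)) -> xk @ \oo --> x ->
      exists fk : nat -> vec, (forall k, F (xk k) (fk k)) /\ fk @ \oo --> f.

Definition locally_bounded_in (C : set vec) (F : vec -> set vec) : Prop :=
  forall x, C x -> exists r : R, 0 < r /\ exists M : R,
    forall y, C y -> enorm (y - x) < r -> forall f, F y f -> enorm f <= M.

End Defs.

From HB Require Import structures.
From mathcomp Require Import all_boot all_order all_algebra.
From mathcomp Require Import all_classical all_reals all_analysis.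
From mathcomp Require Import ring lra.
Import Order.TTheory GRing.Theory Num.Theory.
Import numFieldNormedType.Exports.
Local Open Scope classical_set_scope.
Local Open Scope ring_scope.

(* Each limiting gradient v = lim grad V (x_k) is paired, by inner
   semicontinuity of F, with velocities f_k in F (x_k) tending to f.  The
   hypothesis gives <grad V (x_k), f_k> <= gamma (|x_k|_A), and both sides
   converge because the inner product, the distance to A (1-Lipschitz) and
   gamma on [0, +oo) are continuous.  The bound is linear in v, so it passes
   to convex combinations. *)

Section EuclideanSpace.
Context {R : realType} {n : nat}.
Implicit Types (u v w : 'rV[R]_n).

Lemma dotpC u v : dotp u v = dotp v u.
Proof. by apply: eq_bigr => i _; rewrite mulrC. Qed.

Lemma dotpDl u v w : dotp (u + v) w = dotp u w + dotp v w.
Proof. by rewrite /dotp -big_split; apply: eq_bigr => i _; rewrite mxE mulrDl. Qed.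

Lemma dotpZl (a : R) u w : dotp (a *: u) w = a * dotp u w.
Proof. by rewrite /dotp mulr_sumr; apply: eq_bigr => i _; rewrite mxE mulrA. Qed.

Lemma dotpNl u w : dotp (- u) w = - dotp u w.
Proof. by rewrite -scaleN1r dotpZl mulN1r. Qed.

Lemma dotp0l w : dotp 0 w = 0.
Proof. by rewrite /dotp big1 // => i _; rewrite mxE mul0r. Qed.

Lemma dotp_sumZl m (a : 'I_m -> R) (p : 'I_m -> 'rV[R]_n) w :
  dotp (\sum_(i < m) a i *: p i) w = \sum_(i < m) a i * dotp (p i) w.
Proof.
rewrite (big_morph (fun u => dotp u w) (fun u v => dotpDl u v w) (dotp0l w)).
by apply: eq_bigr => i _; rewrite dotpZl.
Qed.

Lemma dotpp_ge0 u : 0 <= dotp u u.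
Proof. by apply: sumr_ge0 => i _; rewrite -expr2 sqr_ge0. Qed.

Lemma dotpp_eq0 u : dotp u u = 0 -> u = 0.
Proof.
move=> u0; apply/rowP => i; rewrite mxE.
have sq_ge0 (j : 'I_n) : true -> 0 <= u 0 j * u 0 j by rewrite -expr2 sqr_ge0.
by have /eqP := psumr_eq0P sq_ge0 u0 (i := i) isT; rewrite mulf_eq0 orbb => /eqP.
Qed.

Lemma cauchy_schwarz u v : dotp u v ^+ 2 <= dotp u u * dotp v v.
Proof.
have [v0|vn0] := eqVneq (dotp v v) 0.
  by move/dotpp_eq0: v0 => ->; rewrite dotp0l mulr0 dotpC dotp0l expr0n.
have vpos : 0 < dotp v v by rewrite lt_def vn0 dotpp_ge0.
(* expand 0 <= |<v,v> u - <u,v> v|^2 = <v,v> (<u,u><v,v> - <u,v>^2) *)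
have := dotpp_ge0 (dotp v v *: u - dotp u v *: v).
rewrite !(dotpDl, dotpNl, dotpZl) (dotpC u) (dotpC v) !(dotpDl, dotpNl, dotpZl).
rewrite (dotpC v u).
have -> : dotp v v * (dotp v v * dotp u u - dotp u v * dotp u v) -
    dotp u v * (dotp v v * dotp u v - dotp u v * dotp v v) =
    dotp v v * (dotp u u * dotp v v - dotp u v ^+ 2) by ring.
by rewrite pmulr_rge0 // subr_ge0.
Qed.

Lemma enorm_ge0 u : 0 <= enorm u.
Proof. exact: sqrtr_ge0. Qed.

Lemma enormN u : enorm (- u) = enorm u.
Proof. by rewrite /enorm dotpNl dotpC dotpNl opprK. Qed.

Lemma dotp_le_enorm u v : dotp u v <= enorm u * enorm v.
Proof.
rewrite /enorm -sqrtrM ?dotpp_ge0 //.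
by apply: le_trans (ler_wsqrtr (cauchy_schwarz u v)); rewrite sqrtr_sqr ler_norm.
Qed.

Lemma ler_enormD u v : enorm (u + v) <= enorm u + enorm v.
Proof.
rewrite -[enorm u + enorm v]ger0_norm ?addr_ge0 ?enorm_ge0 //.
rewrite -sqrtr_sqr /enorm ler_wsqrtr // sqrrD !sqr_sqrtr ?dotpp_ge0 //.
rewrite dotpDl (dotpC u) (dotpC v) !dotpDl (dotpC v u).
have := dotp_le_enorm u v; rewrite /enorm mulr2n; lra.
Qed.

End EuclideanSpace.

Section DistanceToSet.
Context {R : realType} {n : nat} {A : set 'rV[R]_n}.
Hypothesis A0 : A !=set0.
Implicit Types (x y : 'rV[R]_n).

Let dist_has_lbound x : has_lbound [set enorm (x - y) | y in A].
Proof. by exists 0 => _ [y _ <-]; exact: enorm_ge0. Qed.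

Let dist_nonempty x : [set enorm (x - y) | y in A] !=set0.
Proof. by case: A0 => a Aa; exists (enorm (x - a)), a. Qed.

Lemma dist_set_ge0 x : 0 <= dist_set A x.
Proof. by apply: lb_le_inf => // _ [y _ <-]; exact: enorm_ge0. Qed.

Lemma dist_set_le x y : dist_set A x <= dist_set A y + enorm (x - y).
Proof.
rewrite -lerBlDr; apply: lb_le_inf => // _ [b Ab <-]; rewrite lerBlDr.
apply: le_trans (_ : enorm (x - b) <= _); first by apply: ge_inf => //; exists b.
have -> : x - b = (y - b) + (x - y) by rewrite [RHS]addrC addrA subrK.
exact: ler_enormD.
Qed.

Lemma dist_set_lipschitz x y :
  `|dist_set A x - dist_set A y| <= enorm (x - y).
Proof.
have := dist_set_le x y; have := dist_set_le y x.
rewrite -enormN opprB ler_norml; lra.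
Qed.

End DistanceToSet.

Section Convergence.
Context {R : realType} {n : nat}.
Implicit Types (u w : nat -> 'rV[R]_n) (l lu lw : 'rV[R]_n).

Lemma cvg_coord u l i : u @ \oo --> l -> u k 0 i @[k --> \oo] --> l 0 i.
Proof. exact: (continuous_cvg _ (@coord_continuous R 1 n 0 i l)). Qed.

Lemma cvg_dotp {u w lu lw} : u @ \oo --> lu -> w @ \oo --> lw ->
  dotp (u k) (w k) @[k --> \oo] --> dotp lu lw.
Proof.
move=> ulu wlw.
have cvg_terms i : u k 0 i * w k 0 i @[k --> \oo] --> lu 0 i * lw 0 i.
  by apply: cvgM; apply: cvg_coord.
exact: (cvg_big (@add_continuous R) _ (fun i _ => cvg_terms i)).
Qed.

Lemma cvg_enorm_subr u l : u @ \oo --> l -> enorm (u k - l) @[k --> \oo] --> 0.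
Proof.
move=> ul; have ul0 : u k - l @[k --> \oo] --> (0 : 'rV[R]_n).
  by rewrite -(subrr l); apply: cvgB => //; exact: cvg_cst.
have := cvg_dotp ul0 ul0; rewrite dotp0l => dotp_cvg0; rewrite -sqrtr0.
exact: (continuous_cvg _ (@sqrt_continuous R 0) dotp_cvg0).
Qed.

Lemma cvg_dist_set {A : set 'rV[R]_n} {u l} : A !=set0 -> u @ \oo --> l ->
  dist_set A (u k) @[k --> \oo] --> dist_set A l.
Proof.
move=> A0 /cvg_enorm_subr/cvgrPdist_lt ul; apply/cvgrPdist_lt => e e0.
apply: filterS (ul e e0) => k; rewrite sub0r normrN ger0_norm ?enorm_ge0 //.
by apply: le_lt_trans; rewrite distrC dist_set_lipschitz.
Qed.

End Convergence.

Lemma cvg_within_continuous (T U : topologicalType) (S : set T) (g : T -> U)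
    (t : nat -> T) (l : T) :
  {within S, continuous g} -> (forall k, S (t k)) -> S l -> t @ \oo --> l ->
  g (t k) @[k --> \oo] --> g l.
Proof.
move=> /subspace_continuousP/(_ l) gl St Sl tl; apply: cvg_comp (gl Sl).
by move=> P /tl; apply: (@filterS _ \oo) => k /(_ (St k)).
Qed.

Lemma conv_hull_dotp_le (R : realType) (n : nat) (S : set 'rV[R]_n)
    (f : 'rV[R]_n) (c : R) :
  (forall p, S p -> dotp p f <= c) -> forall v, conv_hull S v -> dotp v f <= c.
Proof.
move=> Sle _ [m [a [p [a0 [a1 [Sp ->]]]]]]; rewrite dotp_sumZl.
apply: le_trans (_ : \sum_(i < m) a i * c <= _).
  by apply: ler_sum => i _; apply: ler_wpM2l => //; exact: Sle.
by rewrite -mulr_suml a1 mul1r.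
Qed.

Theorem proposition1 (R : realType) (n : nat) (O : set 'rV[R]_n)
  (V : 'rV[R]_n -> R) (F : 'rV[R]_n -> set 'rV[R]_n) (A : set 'rV[R]_n)
  (gamma : R -> R) :
  open O ->
  locally_lipschitz_on O V ->
  inner_semicontinuous_in O F ->
  locally_bounded_in O F ->
  closed A -> A !=set0 ->
  {within [set t : R | 0 <= t], continuous gamma} ->
  (forall y, O y -> ~ nondiff_set O V y ->
     forall f, F y f -> dotp (grad V y) f <= gamma (dist_set A y)) ->
  forall x, O x -> forall v, clarke_grad O V x v -> forall f, F x f ->
    dotp v f <= gamma (dist_set A x).
Proof.
move=> _ _ isc_F _ _ A0 gamma_cont grad_le x Ox v clarke_v f Ff.
apply: conv_hull_dotp_le clarke_v => w [xk [xk_x [xk_reg grad_v]]].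
have [fk [Ffk fk_f]] := isc_F x Ox f Ff xk (fun k => (xk_reg k).1) xk_x.
have gamma_dist : gamma (dist_set A (xk k)) @[k --> \oo] --> gamma (dist_set A x).
  apply: cvg_within_continuous gamma_cont _ _ (cvg_dist_set A0 xk_x) => [k|];
  exact: dist_set_ge0.
apply: ler_cvg_to (cvg_dotp grad_v fk_f) gamma_dist _.
by apply: nearW => k; have [Oxk regk] := xk_reg k; exact: grad_le.
Qed.
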